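(* Consider a market with $n$ buyers, $m$ items and $T$ time periods. Item $j$ has per-period supply $s_j^t\ge 0$ for each $t=1,\dots,T$ and overall supply $s_j\ge 0$. Buyer $i$ has budget $B_i\ge 0$, valuations $v_{ij}\ge 0$, and demands $d_i^t\ge 0$ with total demand $d_i=\sum_t d_i^t$. An allocation is $x=(x_{ij}^t)\ge 0$, and buyer $i$'s utility is $u_i=\sum_j v_{ij}\big(\sum_t x_{ij}^t\big)-d_i$. Assume there is a feasible allocation (for the constraints below) with $u_i>0$ for all $i$. Let $x$ be an optimal solution of $$\max_{x\ge 0}\sum_i B_i\log\Big(\sum_j v_{ij}\sum_t x_{ij}^t-d_i\Big)\ \ \text{s.t.}\ \ \sum_i x_{ij}^t\le s_j^t\ \forall j,t;\qquad \sum_{t,i}x_{ij}^t\le s_j\ \forall j,$$ and let $\lambda_j^t\ge 0$ and $\lambda_j\ge 0$ be optimal dual variables of the per-period and overall supply constraints respectively (satisfying the KKT conditions with $x$). Define prices $p_j^t=\lambda_j^t+\lambda_j$. Then for every buyer $i$, $$\sum_{t,j}x_{ij}^t p_j^t=B_i\Big(1+\frac{d_i}{u_i}\Big).$$ *)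

From HB Require Import structures.
From mathcomp Require Import all_boot all_order all_algebra.
From mathcomp Require Import reals exp.
Set Implicit Arguments. Unset Strict Implicit. Unset Printing Implicit Defensive.
Import Order.TTheory GRing.Theory Num.Theory.
Local Open Scope ring_scope.

Section Market.
Variables (R : realType) (n m T : nat).
(* x i j t = x_{ij}^t ; v i j = v_{ij} ; dt i t = d_i^t ; st j t = s_j^t ; s j = s_j *)
Variables (B : 'I_n -> R) (v : 'I_n -> 'I_m -> R) (dt : 'I_n -> 'I_T -> R)
          (st : 'I_m -> 'I_T -> R) (s : 'I_m -> R).

Definition total_demand (i : 'I_n) : R := \sum_(t < T) dt i t.

Definition utility (x : 'I_n -> 'I_m -> 'I_T -> R) (i : 'I_n) : R :=
  \sum_(j < m) v i j * (\sum_(t < T) x i j t) - total_demand i.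

Definition feasible (x : 'I_n -> 'I_m -> 'I_T -> R) : Prop :=
  [/\ (forall i j t, 0 <= x i j t),
      (forall j t, \sum_(i < n) x i j t <= st j t) &
      (forall j, \sum_(t < T) \sum_(i < n) x i j t <= s j)].

Definition objective (x : 'I_n -> 'I_m -> 'I_T -> R) : R :=
  \sum_(i < n) B i * ln (utility x i).

Definition in_domain (x : 'I_n -> 'I_m -> 'I_T -> R) : Prop :=
  forall i, 0 < utility x i.

Definition optimal (x : 'I_n -> 'I_m -> 'I_T -> R) : Prop :=
  [/\ feasible x, in_domain x &
      forall y, feasible y -> in_domain y -> objective y <= objective x].

(* KKT conditions for (x, lt, l), lt j t = lambda_j^t, l j = lambda_j.
   Lagrangian stationarity w.r.t. x_ij^t >= 0:
     B_i v_ij / u_i - lambda_j^t - lambda_j <= 0, with equality (complementary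
     slackness) whenever x_ij^t > 0;
   dual feasibility and complementary slackness for the supply constraints;
   (primal feasibility is part of [optimal]). *)
Definition KKT (x : 'I_n -> 'I_m -> 'I_T -> R)
    (lt : 'I_m -> 'I_T -> R) (l : 'I_m -> R) : Prop :=
  feasible x /\
  (forall j t, 0 <= lt j t) /\ (forall j, 0 <= l j) /\
  (forall i j t, B i * v i j / utility x i <= lt j t + l j) /\
  (forall i j t, x i j t * (B i * v i j / utility x i - (lt j t + l j)) = 0) /\
  (forall j t, lt j t * (st j t - \sum_(i < n) x i j t) = 0) /\
  (forall j, l j * (s j - \sum_(t < T) \sum_(i < n) x i j t) = 0).

End Market.

From HB Require Import structures.
From mathcomp Require Import all_boot all_order all_algebra.
From mathcomp Require Import reals exp.
From mathcomp Require Import ring.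
Import Order.TTheory GRing.Theory Num.Theory.
Local Open Scope ring_scope.

(* By complementary slackness buyer i only buys an item in a period whose price
   equals B_i v_ij / u_i, so she spends B_i / u_i times the value of her bundle,
   and that value is u_i + d_i. *)

Section ProportionalPrices.
Variables (R : comPzRingType) (m T : nat).
Variables (x p : 'I_m -> 'I_T -> R) (v : 'I_m -> R) (c : R).
Hypothesis x_slack : forall j t, x j t * (c * v j - p j t) = 0.

Lemma spending_at_proportional_prices :
  \sum_(t < T) \sum_(j < m) x j t * p j t
  = c * \sum_(j < m) v j * \sum_(t < T) x j t.
Proof.
rewrite exchange_big mulr_sumr; apply: eq_bigr => j _ /=.
rewrite mulr_sumr mulr_sumr; apply: eq_bigr => t _.
have /eqP := x_slack j t; rewrite mulrBr subr_eq0 => /eqP <-.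
by ring.
Qed.

End ProportionalPrices.

Theorem lemma2 (R : realType) (n m T : nat)
  (B : 'I_n -> R) (v : 'I_n -> 'I_m -> R) (dt : 'I_n -> 'I_T -> R)
  (st : 'I_m -> 'I_T -> R) (s : 'I_m -> R)
  (hst : forall j t, 0 <= st j t) (hs : forall j, 0 <= s j)
  (hB : forall i, 0 <= B i) (hv : forall i j, 0 <= v i j)
  (hdt : forall i t, 0 <= dt i t)
  (hex : exists y, feasible st s y /\ in_domain v dt y)
  (x : 'I_n -> 'I_m -> 'I_T -> R) (hopt : optimal B v dt st s x)
  (lt : 'I_m -> 'I_T -> R) (l : 'I_m -> R) (hkkt : KKT B v dt st s x lt l) :
  forall i : 'I_n,
    \sum_(t < T) \sum_(j < m) x i j t * (lt j t + l j)
    = B i * (1 + total_demand dt i / utility v dt x i).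
Proof.
move=> i; case: hopt => _ u_gt0 _; case: hkkt => _ [_ [_ [_ [x_slack _]]]].
set u := utility v dt x i; have u_neq0 : u != 0 by rewrite gt_eqF ?u_gt0.
rewrite (@spending_at_proportional_prices _ _ _ (x i) _ (v i) (B i / u)); last first.
  by move=> j t; rewrite mulrAC; exact: x_slack.
have -> : \sum_(j < m) v i j * \sum_(t < T) x i j t = u + total_demand dt i.
  by rewrite /u /utility subrK.
by field.
Qed.
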